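(* Let $X=(X_1,\dots,X_d)$ be a random vector with values in $\{0,1\}^d$ such that $\mathbb{P}(X=x)>0$ for every $x\in\{0,1\}^d$. For $A\subseteq D:=\{1,\dots,d\}$ let $e_A(X_A):=\dfrac{(-1)^{\sum_{j\in A}X_j}}{\mathbf{P}_A(X_A)}$, with $e_\emptyset(X_\emptyset)=1$. Then for all $A,B\subseteq D$ with $B\subsetneq A$, $\mathbb{E}[e_A(X_A)e_B(X_B)]=0$.
   Context: $X_A:=(X_i)_{i\in A}$ and $\mathbf{P}_A(x_A):=\mathbb{P}(X_A=x_A)$ is its probability mass function. *)

From HB Require Import structures.
From mathcomp Require Import all_boot all_order all_algebra.
From mathcomp Require Import reals.
Set Implicit Arguments. Unset Strict Implicit. Unset Printing Implicit Defensive.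
Import Order.TTheory GRing.Theory Num.Theory.
Local Open Scope ring_scope.

(* outcomes x in {0,1}^d, coordinates indexed by 'I_d (= D), true = 1 *)
Definition outcome (d : nat) := {ffun 'I_d -> bool}.

Definition is_pmf (R : realType) (d : nat) (P : outcome d -> R) :=
  (forall x, 0 <= P x) /\ \sum_(x : outcome d) P x = 1.

Definition marg (R : realType) (d : nat) (P : outcome d -> R)
  (A : {set 'I_d}) (x : outcome d) : R :=
  \sum_(y : outcome d | [forall j in A, y j == x j]) P y.

Definition eA (R : realType) (d : nat) (P : outcome d -> R)
  (A : {set 'I_d}) (x : outcome d) : R :=
  (-1) ^+ #|[set j in A | x j]| / marg P A x.

Definition expect (R : realType) (d : nat) (P : outcome d -> R)
  (f : outcome d -> R) : R :=
  \sum_(x : outcome d) P x * f x.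

From HB Require Import structures.
From mathcomp Require Import all_boot all_order all_algebra.
From mathcomp Require Import reals.
Import Order.TTheory GRing.Theory Num.Theory.
Local Open Scope ring_scope.

(* Write s_A(x) = (-1)^(sum_{j in A} x_j), so that e_A = s_A / P_A.  As e_B and
   s_A only depend on x_A when B is contained in A, the factor P(x) / P_A(x)
   sums to one on each class {X_A = x_A}, whence
     E[e_A e_B] = sum over the values z of X_A of s_A(z) e_B(z).
   Flipping a coordinate j in A \ B permutes these values, changes the sign of
   s_A and leaves e_B unchanged, so the sum is its own opposite. *)

Set Implicit Arguments. Unset Strict Implicit.

Lemma sum_sign_reversing_involution (R : numDomainType) (T : finType)
    (S : pred T) (f : T -> T) (F : T -> R) :
  involutive f -> (forall x, S (f x) = S x) -> (forall x, F (f x) = - F x) ->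
  \sum_(x | S x) F x = 0.
Proof.
move=> fK Sf Ff; apply/eqP; rewrite -eqNr -sumrN.
rewrite [X in _ == X](reindex_inj (can_inj fK)) /=.
by apply/eqP/eq_big => x; rewrite ?Sf ?Ff.
Qed.

Section Outcomes.
Variable d : nat.
Implicit Types (A B : {set 'I_d}) (x y : outcome d).

(* [restr A x] stands for x_A: it agrees with x on A and is [false] off A, so
   the values of X_A are the z with [restr A z = z]. *)
Definition restr A x : outcome d := [ffun i => (i \in A) && x i].

Definition flip (j : 'I_d) x : outcome d :=
  [ffun i => if i == j then ~~ x i else x i].

Lemma restr_id A x : restr A (restr A x) = restr A x.
Proof. by apply/ffunP => i; rewrite !ffunE andbA andbb. Qed.

Lemma restr_sub A B x : B \subset A -> restr B (restr A x) = restr B x.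
Proof.
move=> /subsetP sBA; apply/ffunP => i; rewrite !ffunE.
by case iB: (i \in B); rewrite //= sBA.
Qed.

Lemma eq_restr A x y :
  (restr A y == restr A x) = [forall j in A, y j == x j].
Proof.
apply/eqP/forall_inP => [/ffunP E j jA | E].
  by have := E j; rewrite !ffunE jA /= => ->.
apply/ffunP => i; rewrite !ffunE.
by case iA: (i \in A); rewrite //= (eqP (E i iA)).
Qed.

Lemma flipK j : involutive (flip j).
Proof.
by move=> x; apply/ffunP => i; rewrite !ffunE; case: (i == j); rewrite ?negbK.
Qed.

Lemma restr_flip_in A j x : j \in A -> restr A (flip j x) = flip j (restr A x).
Proof.
move=> jA; apply/ffunP => i; rewrite !ffunE.
by case: (i =P j) => [->|]; rewrite ?jA.
Qed.

Lemma restr_flip_notin A j x : j \notin A -> restr A (flip j x) = restr A x.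
Proof.
move=> jA; apply/ffunP => i; rewrite !ffunE.
by case: (i =P j) => [->|]; rewrite ?(negPf jA).
Qed.

Section Sign.
Variable R : numDomainType.

Definition sgn_on A x : R := (-1) ^+ #|[set j in A | x j]|.

Lemma sgn_onE A x : sgn_on A x = \prod_(i in A) (-1) ^+ x i.
Proof.
rewrite (eq_bigr (fun i => if x i then -1 else 1)) => [|i _]; last by case: (x i).
rewrite -big_mkcondr prodr_const /sgn_on.
by congr (_ ^+ _); apply: eq_card => i; rewrite inE.
Qed.

Lemma sgn_on_restr A x : sgn_on A (restr A x) = sgn_on A x.
Proof. by rewrite !sgn_onE; apply: eq_bigr => i iA; rewrite ffunE iA. Qed.

Lemma sgn_on_flip A j x : j \in A -> sgn_on A (flip j x) = - sgn_on A x.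
Proof.
move=> jA; rewrite !sgn_onE !(bigD1 j jA) /= ffunE eqxx -mulNr.
congr (_ * _); last by apply: eq_bigr => i /andP[_ /negPf ij]; rewrite ffunE ij.
by case: (x j); rewrite ?expr1 ?expr0 ?opprK.
Qed.

End Sign.

Section Marginals.
Variables (R : realType) (P : outcome d -> R).
Hypothesis P_gt0 : forall x, 0 < P x.

Lemma margE A x : marg P A x = \sum_(y | restr A y == restr A x) P y.
Proof. by apply: eq_bigl => y; rewrite eq_restr. Qed.

Lemma marg_restr A x : marg P A (restr A x) = marg P A x.
Proof. by rewrite !margE restr_id. Qed.

Lemma marg_gt0 A x : 0 < marg P A x.
Proof.
rewrite margE (bigD1 x) //= ltr_wpDr //.
by apply: sumr_ge0 => y _; apply/ltW.
Qed.

Lemma eA_sgn A x : eA P A x = sgn_on R A x / marg P A x.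
Proof. by []. Qed.

Lemma eA_restr A x : eA P A (restr A x) = eA P A x.
Proof. by rewrite !eA_sgn sgn_on_restr marg_restr. Qed.

Lemma eA_restr_sup A B x : B \subset A -> eA P B (restr A x) = eA P B x.
Proof. by move=> sBA; rewrite -eA_restr restr_sub // eA_restr. Qed.

Lemma eA_flip_notin B j x : j \notin B -> eA P B (flip j x) = eA P B x.
Proof. by move=> jB; rewrite -eA_restr restr_flip_notin // eA_restr. Qed.

Lemma expect_div_marg A (h : outcome d -> R) :
    (forall x, h (restr A x) = h x) ->
  expect P (fun x => h x / marg P A x) = \sum_(z | restr A z == z) h z.
Proof.
move=> hA; rewrite /expect (partition_big (restr A) (fun z => restr A z == z)) /=;
  last by move=> x _; rewrite restr_id.
apply: eq_bigr => z /eqP zA.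
rewrite (eq_bigr (fun x => P x * (h z / marg P A z))) => [|x /eqP xz]; last first.
  by rewrite -(hA x) -(marg_restr A x) xz mulrA.
rewrite -big_distrl /= -{1}zA -margE mulrCA divff ?mulr1 //.
by rewrite gt_eqF ?marg_gt0.
Qed.

End Marginals.
End Outcomes.

Theorem proposition3 (R : realType) (d : nat) (P : outcome d -> R)
  (hP : is_pmf P) (hpos : forall x, 0 < P x)
  (A B : {set 'I_d}) (hBA : B \proper A) :
  expect P (fun x => eA P A x * eA P B x) = 0.
Proof.
have [sBA [j jA jB]] := properP hBA.
pose h x := sgn_on R A x * eA P B x.
have -> : expect P (fun x => eA P A x * eA P B x)
          = expect P (fun x => h x / marg P A x).
  by apply: eq_bigr => x _; rewrite eA_sgn mulrAC.
rewrite expect_div_marg // => [|x]; last by rewrite /h sgn_on_restr eA_restr_sup.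
apply: (sum_sign_reversing_involution (flipK j)) => [z|z].
  by rewrite restr_flip_in // (inj_eq (can_inj (flipK j))).
by rewrite /h sgn_on_flip // eA_flip_notin // mulNr.
Qed.
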